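(* Let $f_n=[\psi_1,\psi_1^*]\cdots[\psi_n,\psi_n^*]\in\mathrm{Cl}_q(n,k)$, where $[A,B]=AB-BA$, and let $\mathrm{Cl}_q^+(n,k)$ be the subalgebra generated by the elements of even degree for the $\mathbb{Z}_2$-grading. Let $\pi\colon\mathrm{Cl}_q(n,k)\to\mathrm{End}(W)$ be an irreducible representation. Then $W=W^+\oplus W^-$ with $W^\pm=(1\pm\pi(f_n))(W)$, and each $W^\pm$ is invariant under $\mathrm{Cl}_q^+(n,k)$.
   Context: Let $\mathbb{k}$ be a field of characteristic different from $2$, let $q\in\mathbb{k}^\times$, and let $n,k$ be positive integers. The quantum Clifford algebra $\mathrm{Cl}_q(n,k)$ is the unital associative $\mathbb{k}$-algebra generated by $\psi_a,\psi_a^*,\omega_a,\omega_a^{-1}$ for $a\in\{1,\dots,n\}$, subject to the relations (for all $a,b\in\{1,\dots,n\}$): $\omega_a\omega_b=\omega_b\omega_a$; $\omega_a\omega_a^{-1}=1$; $\omega_a\psi_b=q^{\delta_{ab}}\psi_b\omega_a$; $\omega_a\psi_b^*=q^{-\delta_{ab}}\psi_b^*\omega_a$; $\psi_a\psi_b+\psi_b\psi_a=0$; $\psi_a^*\psi_b^*+\psi_b^*\psi_a^*=0$; $\psi_a\psi_a^*+q^k\psi_a^*\psi_a=\omega_a^{-k}$; $\psi_a\psi_a^*+q^{-k}\psi_a^*\psi_a=\omega_a^{k}$; and $\psi_a\psi_b^*+\psi_b^*\psi_a=0$ if $a\neq b$. The $\mathbb{Z}_2$-grading (superalgebra structure) is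 given by declaring $\psi_a,\psi_a^*$ odd and $\omega_a^{\pm1}$ even. *)

From HB Require Import structures.
From mathcomp Require Import all_boot all_order all_algebra.
Set Implicit Arguments. Unset Strict Implicit. Unset Printing Implicit Defensive.
Import GRing.Theory.
Local Open Scope ring_scope.

(* A representation pi : Cl_q(n,k) -> End(W) on a K-vector space W, given by
   the images of the generators psi_a, psi_a^*, omega_a, omega_a^{-1}
   (a : 'I_n, i.e. a in {1,..,n} shifted to {0,..,n-1}), which are linear
   endomorphisms of W satisfying the defining relations of Cl_q(n,k). *)
Record ClRep (K : fieldType) (q : K) (n k : nat) (W : lmodType K) := {
  psi  : 'I_n -> W -> W;
  psis : 'I_n -> W -> W;
  om   : 'I_n -> W -> W;
  omi  : 'I_n -> W -> W;
  psi_lin  : forall a (c : K) (u v : W), psi a (c *: u + v) = c *: psi a u + psi a v;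
  psis_lin : forall a (c : K) (u v : W), psis a (c *: u + v) = c *: psis a u + psis a v;
  om_lin   : forall a (c : K) (u v : W), om a (c *: u + v) = c *: om a u + om a v;
  omi_lin  : forall a (c : K) (u v : W), omi a (c *: u + v) = c *: omi a u + omi a v;
  rel_om_comm : forall a b v, om a (om b v) = om b (om a v);
  rel_om_omi : forall a v, om a (omi a v) = v;
  rel_omi_om : forall a v, omi a (om a v) = v;
  rel_om_psi : forall a b v, om a (psi b v) = (if a == b then q else 1) *: psi b (om a v);
  rel_om_psis : forall a b v,
      om a (psis b v) = (if a == b then q^-1 else 1) *: psis b (om a v);
  rel_psi_psi : forall a b v, psi a (psi b v) + psi b (psi a v) = 0;
  rel_psis_psis : forall a b v, psis a (psis b v) + psis b (psis a v) = 0;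
  rel_psi_psis_minus : forall a v,
      psi a (psis a v) + q ^+ k *: psis a (psi a v) = iter k (omi a) v;
  rel_psi_psis_plus : forall a v,
      psi a (psis a v) + q ^- k *: psis a (psi a v) = iter k (om a) v;
  rel_psi_psis_ne : forall a b v, a != b -> psi a (psis b v) + psis b (psi a v) = 0
}.

Section Defs.
Variables (K : fieldType) (q : K) (n k : nat) (W : lmodType K).
Variable pi : ClRep q n k W.

Definition is_subspace (S : W -> Prop) :=
  S 0 /\ (forall (c : K) u v, S u -> S v -> S (c *: u + v)).

Inductive gen := GPsi of 'I_n | GPsiS of 'I_n | GOm of 'I_n | GOmi of 'I_n.

Definition gen_act (g : gen) : W -> W :=
  match g with
  | GPsi a => psi pi a | GPsiS a => psis pi a
  | GOm a => om pi a | GOmi a => omi pi a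
  end.

Definition gen_odd (g : gen) : bool :=
  match g with GPsi _ | GPsiS _ => true | _ => false end.

Definition word_act (w : seq gen) : W -> W :=
  foldr (fun g f => gen_act g \o f) id w.

(* monomials of even Z_2-degree; they span Cl_q^+(n,k) *)
Definition even_word (w : seq gen) : bool := ~~ odd (count gen_odd w).

Definition irreducible : Prop :=
  (exists v : W, v != 0) /\
  forall S : W -> Prop, is_subspace S ->
    (forall g v, S v -> S (gen_act g v)) ->
    (forall v, S v -> v = 0) \/ (forall v, S v).

Definition comm_act (a : 'I_n) (v : W) : W :=
  psi pi a (psis pi a v) - psis pi a (psi pi a v).

Definition fn_act : W -> W :=
  foldr (fun a f => comm_act a \o f) id (enum 'I_n).

Definition Wplus (v : W) : Prop := exists u, v = u + fn_act u.
Definition Wminus (v : W) : Prop := exists u, v = u - fn_act u.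

Definition direct_sum_decomp (S1 S2 : W -> Prop) : Prop :=
  (forall v, exists v1 v2, [/\ S1 v1, S2 v2 & v = v1 + v2]) /\
  (forall v, S1 v -> S2 v -> v = 0).

Definition Clplus_invariant (S : W -> Prop) : Prop :=
  forall w, even_word w -> forall v, S v -> S (word_act w v).

End Defs.

(* Each commutator c_a = [psi_a, psi*_a] is an involution: psi_a^2 and
   psi*_a^2 vanish because 2 != 0, and the two quadratic relations of
   Cl_q(n,k) then give c_a^2 = omega_a^k omega_a^-k = 1.  Moreover c_a
   anticommutes with psi_a, psi*_a and commutes with every other generator,
   so the pairwise commuting c_a multiply to an involution f_n which
   anticommutes with the odd generators and commutes with the even ones.
   For a linear involution F, (1 + F)(W) and (1 - F)(W) are the +1 and -1
   eigenspaces, complementary since 2 != 0, and both are preserved by every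
   linear map commuting with F, in particular by the even monomials. *)

From HB Require Import structures.
From mathcomp Require Import all_boot all_order all_algebra.
Set Implicit Arguments. Unset Strict Implicit. Unset Printing Implicit Defensive.
Import GRing.Theory.
Local Open Scope ring_scope.

Lemma iter_can (T : Type) (f g : T -> T) m :
  cancel g f -> cancel (iter m g) (iter m f).
Proof. by move=> gK; elim: m => [|m IHm] x //; rewrite iterSr iterS gK IHm. Qed.

Section Involution.
Variables (K : fieldType) (W : lmodType K).
Hypothesis two_neq0 : (2%:R : K) != 0.

Lemma addvv_eq0 (u : W) : u + u = 0 -> u = 0.
Proof.
move=> uu0; have : (2%:R : K) *: u == 0 by rewrite scaler_nat mulr2n uu0.
by rewrite scaler_eq0 (negbTE two_neq0) => /eqP.
Qed.

Definition image_idD (F : W -> W) (v : W) : Prop := exists u, v = u + F u.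

Variable F : {linear W -> W}.

Lemma image_idD_subspace : is_subspace (image_idD F).
Proof.
split; first by exists 0; rewrite linear0 addr0.
move=> c _ _ [u1 ->] [u2 ->]; exists (c *: u1 + u2).
by rewrite linearP scalerDr addrACA.
Qed.

Lemma image_idD_invariant (g : {linear W -> W}) :
  (forall v, g (F v) = F (g v)) -> forall v, image_idD F v -> image_idD F (g v).
Proof. by move=> gF _ [u ->]; exists (g u); rewrite linearD gF. Qed.

Lemma involution_direct_sum :
  involutive F -> direct_sum_decomp (image_idD F) (image_idD (\- F)).
Proof.
move=> FK; split=> [v | _ [u ->] [u' e]].
  pose h := (2%:R : K)^-1 *: v.
  exists (h + F h), (h - F h); split; [by exists h | by exists h |].
  by rewrite addrACA subrr addr0 -mulr2n -scaler_nat scalerA mulfV ?scale1r.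
apply: (addvv_eq0 (u := u + F u)).
have fixed : F (u + F u) = u + F u by rewrite linearD FK addrC.
have negated : F (u + F u) = - (u + F u) by rewrite e linearB /= FK opprB.
by rewrite -{1}fixed negated addNr.
Qed.

End Involution.

Section Commutators.
Variables (K : fieldType) (q : K) (n k : nat) (W : lmodType K).
Variable pi : ClRep q n k W.
Hypotheses (two_neq0 : (2%:R : K) != 0) (q_neq0 : q != 0).

Local Notation psi := (psi pi).
Local Notation psis := (psis pi).
Local Notation om := (om pi).
Local Notation omi := (omi pi).
Local Notation comm_act := (comm_act pi).
Local Notation fn_act := (fn_act pi).

HB.instance Definition _ a := GRing.isLinear.Build K W W *:%R (psi a) (psi_lin pi a).
HB.instance Definition _ a := GRing.isLinear.Build K W W *:%R (psis a) (psis_lin pi a).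
HB.instance Definition _ a := GRing.isLinear.Build K W W *:%R (om a) (om_lin pi a).
HB.instance Definition _ a := GRing.isLinear.Build K W W *:%R (omi a) (omi_lin pi a).

Lemma gen_act_is_linear g : linear (gen_act pi g).
Proof. by case: g => a c u v; rewrite /= linearP. Qed.
HB.instance Definition _ g :=
  GRing.isLinear.Build K W W *:%R (gen_act pi g) (gen_act_is_linear g).

Lemma word_act_is_linear w : linear (word_act pi w).
Proof. by elim: w => [|g w IHw] c u v //=; rewrite IHw linearP. Qed.
HB.instance Definition _ w :=
  GRing.isLinear.Build K W W *:%R (word_act pi w) (word_act_is_linear w).

Lemma comm_act_is_linear a : linear (comm_act a).
Proof. by move=> c u v; rewrite /comm_act !linearP /= scalerN scalerBr addrACA. Qed.
HB.instance Definition _ a :=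
  GRing.isLinear.Build K W W *:%R (comm_act a) (comm_act_is_linear a).

Lemma psi2_eq0 a v : psi a (psi a v) = 0.
Proof. exact/addvv_eq0/rel_psi_psi. Qed.

Lemma psis2_eq0 a v : psis a (psis a v) = 0.
Proof. exact/addvv_eq0/rel_psis_psis. Qed.

Lemma comm_act_psi a b v :
  comm_act a (psi b v) = (-1) ^+ (a == b) *: psi b (comm_act a v).
Proof.
rewrite /comm_act; have [<-|neq_ab] := eqVneq a b.
  by rewrite psi2_eq0 linear0 subr0 linearB /= psi2_eq0 sub0r scaleN1r opprK.
have psi_psi w : psi a (psi b w) = - psi b (psi a w).
  exact/esym/addr0_eq/rel_psi_psi.
have psis_psi w : psis a (psi b w) = - psi b (psis a w).
  by apply/esym/addr0_eq/rel_psi_psis_ne; rewrite eq_sym.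
rewrite expr0 scale1r linearB /= psis_psi psi_psi linearN /= linearN /=.
by rewrite psi_psi psis_psi !opprK.
Qed.

Lemma comm_act_psis a b v :
  comm_act a (psis b v) = (-1) ^+ (a == b) *: psis b (comm_act a v).
Proof.
rewrite /comm_act; have [<-|neq_ab] := eqVneq a b.
  by rewrite psis2_eq0 linear0 sub0r linearB /= psis2_eq0 subr0 scaleN1r.
have psis_psis w : psis a (psis b w) = - psis b (psis a w).
  exact/esym/addr0_eq/rel_psis_psis.
have psi_psis w : psi a (psis b w) = - psis b (psi a w).
  by apply/esym/addr0_eq; rewrite addrC; apply: rel_psi_psis_ne.
rewrite expr0 scale1r linearB /= psi_psis psis_psis linearN /= linearN /=.
by rewrite psis_psis psi_psis !opprK.
Qed.

Lemma comm_act_om a b v : comm_act a (om b v) = om b (comm_act a v).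
Proof.
have qqV (s : bool) : (if s then q else 1) * (if s then q^-1 else 1) = 1.
  by case: s; rewrite ?mulfV ?mulr1.
have qVq (s : bool) : (if s then q^-1 else 1) * (if s then q else 1) = 1.
  by case: s; rewrite ?mulVf ?mulr1.
rewrite /comm_act linearB /= rel_om_psi rel_om_psis rel_om_psis rel_om_psi.
by rewrite [psi a (_ *: _)]linearZZ [psis a (_ *: _)]linearZZ !scalerA qqV qVq !scale1r.
Qed.

Lemma comm_act_omi a b v : comm_act a (omi b v) = omi b (comm_act a v).
Proof. by rewrite -[LHS](rel_omi_om pi b) -comm_act_om rel_om_omi. Qed.

Definition gen_index (g : gen n) : 'I_n :=
  match g with GPsi a | GPsiS a | GOm a | GOmi a => a end.

Lemma comm_act_gen a g v :
  comm_act a (gen_act pi g v) =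
  (-1) ^+ (gen_odd g && (a == gen_index g)) *: gen_act pi g (comm_act a v).
Proof.
case: g => b /=; rewrite ?comm_act_psi ?comm_act_psis //.
  by rewrite comm_act_om scale1r.
by rewrite comm_act_omi scale1r.
Qed.

Lemma comm_actK a : involutive (comm_act a).
Proof.
(* Left multiplying psi psi* + q^k psi* psi = omega^-k by psi psi* and by
   psi* psi expresses both surviving terms of c_a^2 through omega^-k. *)
move=> v; set w := iter k (omi a) v.
have minus_rel : q ^+ k *: psis a (psi a v) + psi a (psis a v) = w.
  by rewrite addrC; apply: rel_psi_psis_minus.
have PSw : psi a (psis a w) = psi a (psis a (psi a (psis a v))).
  rewrite -minus_rel [psis a _]linearP [psi a _]linearP /=.
  by rewrite psis2_eq0 linear0 scaler0 add0r.
have SPw : psis a (psi a w) = q ^+ k *: psis a (psi a (psis a (psi a v))).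
  by rewrite -minus_rel [psi a _]linearP [psis a _]linearP /= psi2_eq0 linear0 addr0.
have SPSP : psis a (psi a (psis a (psi a v))) = q ^- k *: psis a (psi a w).
  by rewrite SPw scalerA mulVf ?expf_neq0 // scale1r.
rewrite -[RHS](iter_can k (rel_om_omi pi a) v) -/w -rel_psi_psis_plus PSw -SPSP.
by rewrite /comm_act !linearB /= psis2_eq0 psi2_eq0 !linear0 addr0 sub0r opprK.
Qed.

Lemma comm_act_comm a b v :
  a != b -> comm_act a (comm_act b v) = comm_act b (comm_act a v).
Proof.
move=> /negbTE neq_ab.
have -> : comm_act b v = psi b (psis b v) - psis b (psi b v) by [].
rewrite linearB /= comm_act_psi comm_act_psis comm_act_psis comm_act_psi neq_ab.
by rewrite !expr0 !scale1r.
Qed.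

Definition comm_prod (l : seq 'I_n) : W -> W :=
  foldr (fun a f => comm_act a \o f) id l.

Lemma comm_prod_is_linear l : linear (comm_prod l).
Proof. by elim: l => [|a l IHl] c u v //=; rewrite IHl linearP. Qed.
HB.instance Definition _ l :=
  GRing.isLinear.Build K W W *:%R (comm_prod l) (comm_prod_is_linear l).

Lemma comm_prod_gen l g v :
  comm_prod l (gen_act pi g v) =
  (-1) ^+ count (fun a => gen_odd g && (a == gen_index g)) l
    *: gen_act pi g (comm_prod l v).
Proof.
elim: l => [|a l IHl] /=; first by rewrite scale1r.
by rewrite IHl linearZZ /= comm_act_gen scalerA -exprD addnC.
Qed.

Lemma comm_act_prod a l v :
  a \notin l -> comm_act a (comm_prod l v) = comm_prod l (comm_act a v).
Proof.
elim: l v => [|b l IHl] v //=; rewrite in_cons negb_or => /andP[neq_ab a_l].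
by rewrite comm_act_comm // IHl.
Qed.

Lemma comm_prodK l : uniq l -> involutive (comm_prod l).
Proof.
elim: l => [|a l IHl] //= /andP[a_l uniq_l] v /=.
by rewrite -comm_act_prod // comm_actK IHl.
Qed.

HB.instance Definition _ :=
  GRing.isLinear.Build K W W *:%R fn_act (comm_prod_is_linear (enum 'I_n)).

Lemma fn_actK : involutive fn_act.
Proof. exact: comm_prodK (enum_uniq _). Qed.

Lemma fn_act_gen g v :
  fn_act (gen_act pi g v) = (-1) ^+ gen_odd g *: gen_act pi g (fn_act v).
Proof.
rewrite [LHS]comm_prod_gen; congr (_ ^+ _ *: _).
case: (gen_odd g) => /=; last exact: count_pred0.
by rewrite (count_uniq_mem _ (enum_uniq _)) mem_enum.
Qed.

Lemma fn_act_word w v :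
  fn_act (word_act pi w v) =
  (-1) ^+ count (@gen_odd n) w *: word_act pi w (fn_act v).
Proof.
elim: w => [|g w IHw] /=; first by rewrite scale1r.
by rewrite fn_act_gen IHw linearZZ scalerA -exprD.
Qed.

Lemma fn_act_even_word w v :
  even_word w -> fn_act (word_act pi w v) = word_act pi w (fn_act v).
Proof. by move=> /negbTE ew; rewrite fn_act_word -signr_odd ew scale1r. Qed.

End Commutators.

Theorem proposition4p7 (K : fieldType) (hK : (2%:R : K) != 0)
  (q : K) (hq : q != 0) (n k : nat) (hn : (0 < n)%N) (hk : (0 < k)%N)
  (W : lmodType K) (pi : ClRep q n k W) :
  irreducible pi ->
  [/\ direct_sum_decomp (Wplus pi) (Wminus pi),
      is_subspace (Wplus pi), is_subspace (Wminus pi),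
      Clplus_invariant pi (Wplus pi) & Clplus_invariant pi (Wminus pi)].
Proof.
move=> _.
have fn_act_comm w : even_word w ->
    forall v, word_act pi w (fn_act pi v) = fn_act pi (word_act pi w v).
  by move=> ew v; rewrite fn_act_even_word.
split.
- exact/involution_direct_sum/fn_actK.
- exact: (image_idD_subspace (fn_act pi)).
- exact: (image_idD_subspace (\- fn_act pi)).
- by move=> w /fn_act_comm; apply: image_idD_invariant.
- move=> w /fn_act_comm wF; apply: (image_idD_invariant (F := \- fn_act pi)) => v /=.
  by rewrite linearN /= wF.
Qed.
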